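(* Let $(\mathcal A,\jmath)_K$ be a $\mathrm{C}^*$-net bundle over a pathwise connected poset $K$ and fix $o\in K$. The set of states of $(\mathcal A,\jmath)_K$ is in one-to-one correspondence with the set of $\pi_1^o(K)$-invariant states of the holonomy dynamical system $(\mathcal A_o,\pi_1^o(K),\jmath_* )$.
   Context: Poset homotopy: $0$-simplices are elements of $K$; an $n$-simplex $x$ ($n\ge1$) consists of $(n-1)$-simplices $\partial_0x,\dots,\partial_nx$ and a support $|x|\in K$ with $|\partial_ix|\le|x|$. Paths are concatenations $b_n*\cdots*b_1$ with $\partial_0b_i=\partial_1b_{i+1}$; homotopy is generated by replacing consecutive $\partial_0c*\partial_2c$ by $\partial_1c$ or conversely; $\pi_1^o(K)$ is the group of homotopy classes of loops at $o$. A $\mathrm{C}^*$-net bundle: unital $\mathrm{C}^*$-algebras $\mathcal A_a$ and ${}^*$-isomorphisms $\jmath_{ea}:\mathcal A_a\to\mathcal A_e$ ($a\le e$) with $\jmath_{ea}\circ\jmath_{ad}=\jmath_{ed}$; $\jmath_{ae}:=\jmath_{ea}^{-1}$. Holonomy: $\jmath_b:=\jmath_{\partial_0b\,|b|}\circ\jmath_{|b|\,\partial_1b}$ for a $1$-simplex $b$, $\jmath_p:=\jmath_{b_n}\circ\cdots\circ\jmath_{b_1}$ for a path; $\jmath_p$ is homotopy invariant and $\jmath_{*,[p]}:=\jmath_p$ defines an action of $\pi_1^o(K)$ on $\mathcal A_o$. A state of the net bundle is a family of states $\omega_a$ of $\mathcal A_a$ with $\omega_a=\omega_e\circ\jmath_{ea}$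 for $a\le e$; an invariant state of the dynamical system is a state $\varphi$ of $\mathcal A_o$ with $\varphi\circ\jmath_{*,[p]}=\varphi$ for all $[p]$. *)

From HB Require Import structures.
From mathcomp Require Import all_boot all_order all_algebra.
From mathcomp Require Import reals.
From mathcomp Require Import complex.
Set Implicit Arguments. Unset Strict Implicit. Unset Printing Implicit Defensive.
Import Order.TTheory GRing.Theory Num.Theory.
Local Open Scope ring_scope.

Record CStarAlgebra (R : realType) := {
  cs_alg :> algType R[i];
  cs_star : cs_alg -> cs_alg;
  cs_norm : cs_alg -> R;
  cs_starD : forall x y, cs_star (x + y) = cs_star x + cs_star y;
  cs_starZ : forall (c : R[i]) x, cs_star (c *: x) = (Num.conj c) *: cs_star x;
  cs_starM : forall x y, cs_star (x * y) = cs_star y * cs_star x;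
  cs_starK : forall x, cs_star (cs_star x) = x;
  cs_norm_ge0 : forall x, 0 <= cs_norm x;
  cs_norm_eq0 : forall x, cs_norm x = 0 -> x = 0;
  cs_normD : forall x y, cs_norm (x + y) <= cs_norm x + cs_norm y;
  cs_normZ : forall (c : R[i]) x, ((cs_norm (c *: x))%:C)%C = `|c| * ((cs_norm x)%:C)%C;
  cs_normM : forall x y, cs_norm (x * y) <= cs_norm x * cs_norm y;
  cs_normC : forall x, cs_norm (cs_star x * x) = cs_norm x ^+ 2;
  cs_complete : forall u : nat -> cs_alg,
    (forall eps : R, 0 < eps -> exists N, forall m n, (N <= m)%N -> (N <= n)%N ->
        cs_norm (u m - u n) < eps) ->
    exists l, forall eps : R, 0 < eps -> exists N, forall n, (N <= n)%N ->
        cs_norm (u n - l) < eps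
}.

Definition is_state (R : realType) (A : CStarAlgebra R) (phi : A -> R[i]) : Prop :=
  (forall (c : R[i]) (x y : A), phi (c *: x + y) = c * phi x + phi y) /\
  (forall x : A, 0 <= phi (cs_star x * x)) /\
  phi 1 = 1.

Definition is_star_iso (R : realType) (A B : CStarAlgebra R)
    (f : A -> B) (g : B -> A) : Prop :=
  [/\ (forall (c : R[i]) (x y : A), f (c *: x + y) = c *: f x + f y),
      (forall x y : A, f (x * y) = f x * f y),
      f 1 = 1,
      (forall x : A, f (cs_star x) = cs_star (f x))
    & (cancel f g /\ cancel g f)].

Section Poset.
Context {disp : Order.disp_t} {K : porderType disp}.

Record simplex1 := Simplex1 {
  bd0 : K; bd1 : K; supp1 : K;
  bd0_le : (bd0 <= supp1)%O;
  bd1_le : (bd1 <= supp1)%O }.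

(* A path b_n * ... * b_1 from a to e is the list [:: b_1; ...; b_n] with
   bd1 b_1 = a, bd0 b_i = bd1 b_(i+1), bd0 b_n = e; the empty list is the
   trivial path at a (a = e). *)
Fixpoint is_path (a e : K) (p : seq simplex1) : Prop :=
  match p with
  | [::] => a = e
  | b :: q => bd1 b = a /\ is_path (bd0 b) e q
  end.

Definition pathwise_connected : Prop :=
  forall a e : K, exists p, is_path a e p.

End Poset.
Arguments simplex1 {disp} K.

Record netBundle (R : realType) {disp : Order.disp_t} (K : porderType disp) := {
  nb_alg : K -> CStarAlgebra R;
  (* jmath_{ea} : A_a -> A_e for a <= e, with its inverse jmath_{ae} *)
  nb_j : forall a e : K, (a <= e)%O -> nb_alg a -> nb_alg e;
  nb_jinv : forall a e : K, (a <= e)%O -> nb_alg e -> nb_alg a;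
  nb_iso : forall a e (h : (a <= e)%O), is_star_iso (nb_j h) (nb_jinv h);
  nb_comp : forall a d e (had : (d <= a)%O) (hae : (a <= e)%O) (hde : (d <= e)%O),
      forall x, nb_j hae (nb_j had x) = nb_j hde x
}.

Arguments nb_alg {R disp K} n _.
Arguments nb_j {R disp K} n {a e} _ _.
Arguments nb_jinv {R disp K} n {a e} _ _.

Section Holonomy.
Context (R : realType) {disp : Order.disp_t} {K : porderType disp}
        (N : netBundle R K).
Local Notation A := (nb_alg N).

Definition hol1 (b : simplex1 K) : A (bd1 b) -> A (bd0 b) :=
  fun x => nb_jinv N (bd0_le b) (nb_j N (bd1_le b) x).

(* hol_rel a e p x y : p is a path from a to e and y = jmath_p x. *)
Inductive hol_rel : forall a e : K, seq (simplex1 K) -> A a -> A e -> Prop :=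
| hol_nil (a : K) (x : A a) : @hol_rel a a [::] x x
| hol_cons (b : simplex1 K) (e : K) (p : seq (simplex1 K)) (x : A (bd1 b)) (y : A e) :
    @hol_rel (bd0 b) e p (@hol1 b x) y -> @hol_rel (bd1 b) e (b :: p) x y.

Definition is_bundle_state (om : forall a : K, A a -> R[i]) : Prop :=
  (forall a, is_state (om a)) /\
  (forall a e (h : (a <= e)%O) (x : A a), om a x = om e (nb_j N h x)).

(* pi_1^o(K)-invariant states of the holonomy dynamical system on A_o:
   phi o jmath_p = phi for every loop p at o. *)
Definition is_invariant_state (o : K) (phi : A o -> R[i]) : Prop :=
  is_state phi /\
  (forall (p : seq (simplex1 K)) (x y : A o), hol_rel p x y -> phi y = phi x).

End Holonomy.

Arguments pathwise_connected {disp} K.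
Arguments is_bundle_state {R disp K} N om.
Arguments is_invariant_state {R disp K} N o phi.

From Pilot Require Import Defs.
From HB Require Import structures.
From mathcomp Require Import all_boot all_order all_algebra.
From mathcomp Require Import reals complex.
From Stdlib Require Import ClassicalEpsilon.
Import Order.TTheory GRing.Theory Num.Theory.
Set Implicit Arguments. Unset Strict Implicit. Unset Printing Implicit Defensive.
Local Open Scope ring_scope.

(* A state of the bundle is forced to be invariant under every holonomy map,
   because each inclusion map [j_ea] preserves it; in particular its restriction
   to [A_o] is invariant, and by path connectedness it is determined by that
   restriction. Conversely, an invariant state [phi] of [A_o] extends by
   [om_a x := phi (j_p x)] for any path [p] from [a] to [o]: two such paths differ
   by a loop at [o], so the value does not depend on [p], and [j_p] is a
   *-isomorphism, so [om_a] is a state. Compatibility with [j_ea] follows by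
   prolonging the path from [a] by the 1-simplex with support [e]. *)

Section StarIso.
Variable R : realType.

Lemma star_iso_sym (A B : CStarAlgebra R) (f : A -> B) (g : B -> A) :
  is_star_iso f g -> is_star_iso g f.
Proof.
case=> fD fM f1 fS [fK gK]; split=> //.
- by move=> c x y; apply: (can_inj fK); rewrite fD !gK.
- by move=> x y; apply: (can_inj fK); rewrite fM !gK.
- by apply: (can_inj fK); rewrite f1 gK.
- by move=> x; apply: (can_inj fK); rewrite fS !gK.
Qed.

Lemma star_iso_comp (A B C : CStarAlgebra R)
    (f : A -> B) (g : B -> A) (f' : B -> C) (g' : C -> B) :
  is_star_iso f g -> is_star_iso f' g' -> is_star_iso (f' \o f) (g \o g').
Proof.
case=> fD fM f1 fS [fK gK] [f'D f'M f'1 f'S [f'K g'K]]; split=> /=.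
- by move=> c x y; rewrite fD f'D.
- by move=> x y; rewrite fM f'M.
- by rewrite f1 f'1.
- by move=> x; rewrite fS f'S.
- by split; apply: can_comp.
Qed.

End StarIso.

Section Holonomy.
Variables (R : realType) (disp : Order.disp_t) (K : porderType disp)
          (N : netBundle R K).
Local Notation A := (nb_alg N).
Local Notation hol1 b := (@hol1 R disp K N b).
Local Notation hol_rel := (@hol_rel R disp K N _ _).

Definition rev_simplex (b : simplex1 K) : simplex1 K :=
  Simplex1 (bd1_le b) (bd0_le b).

Definition simplex_of_le (a e : K) (h : (a <= e)%O) : simplex1 K :=
  Simplex1 h (lexx e).

Lemma hol1_star_iso b : is_star_iso (hol1 b) (hol1 (rev_simplex b)).
Proof.
exact: star_iso_comp (nb_iso N (bd1_le b)) (star_iso_sym (nb_iso N (bd0_le b))).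
Qed.

Lemma hol1_simplex_of_le a e (h : (a <= e)%O) (x : A a) :
  hol1 (simplex_of_le h) (nb_j N h x) = x.
Proof.
have [_ _ _ _ [jK _]] := nb_iso N h.
by rewrite /Defs.hol1 /= (nb_comp h (lexx e) h) jK.
Qed.

(* Inversion for [hol_rel] at arbitrary indices; the casts vanish because
   equality proofs on the eqType [K] are unique. *)
Lemma hol_rel_inv a e p (x : A a) (y : A e) : hol_rel p x y ->
  match p with
  | [::] => forall ae : a = e, y = eq_rect a A x e ae
  | b :: q => forall ab : a = bd1 b, hol_rel q (hol1 b (eq_rect a A x (bd1 b) ab)) y
  end.
Proof. by case=> [a' x' | b e' q x' y' hq] eq_a; rewrite (eq_irrelevance eq_a erefl). Qed.

Lemma hol_rel_exists a e p : is_path a e p -> forall x : A a, exists y : A e, hol_rel p x y.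
Proof.
elim: p a => [|b p IHp] a /=; first by move=> -> x; exists x; apply: hol_nil.
case=> <- hp x; have [y hy] := IHp _ hp (hol1 b x).
by exists y; apply: hol_cons.
Qed.

Lemma hol_rel_cat a e f p q (x : A a) (y : A e) (z : A f) :
  hol_rel p x y -> hol_rel q y z -> hol_rel (p ++ q) x z.
Proof. by elim=> // b e' p' x' y' _ IHp hq; apply/hol_cons/IHp. Qed.

Lemma hol_rel_rev a e p (x : A a) (y : A e) :
  hol_rel p x y -> hol_rel (rev (map rev_simplex p)) y x.
Proof.
elim=> [a' x' | b e' p' x' y' _ IHp]; first exact: hol_nil.
rewrite map_cons rev_cons -cats1; apply: (hol_rel_cat IHp).
apply: (hol_cons (b := rev_simplex b)).
by have [_ _ _ _ [hK _]] := hol1_star_iso b; rewrite hK; apply: hol_nil.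
Qed.

Lemma hol_rel_map2 (F : forall a, A a -> A a -> A a) :
    (forall b x x', hol1 b (F _ x x') = F _ (hol1 b x) (hol1 b x')) ->
  forall a e p (x x' : A a) (y y' : A e),
    hol_rel p x y -> hol_rel p x' y' -> hol_rel p (F a x x') (F e y y').
Proof.
move=> F_hol a e p x x' y y' hxy; elim: hxy x' y' => [a0 x0 | b e0 p0 x0 y0 _ IHp] x' y' hxy'.
  by rewrite (hol_rel_inv hxy' erefl); apply: hol_nil.
by apply: hol_cons; rewrite F_hol; apply: IHp (hol_rel_inv hxy' erefl).
Qed.

Lemma hol_rel_lin c a e p (x x' : A a) (y y' : A e) :
  hol_rel p x y -> hol_rel p x' y' -> hol_rel p (c *: x + x') (c *: y + y').
Proof.
apply: (hol_rel_map2 (F := fun _ u v => c *: u + v)) => b u v.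
by have [hD _ _ _ _] := hol1_star_iso b; rewrite hD.
Qed.

Lemma hol_rel_star_mul a e p (x : A a) (y : A e) :
  hol_rel p x y -> hol_rel p (cs_star x * x) (cs_star y * y).
Proof.
move=> hxy; have hol_mul b u v : hol1 b (u * v) = hol1 b u * hol1 b v.
  by have [_ hM _ _ _] := hol1_star_iso b; rewrite hM.
have hol_star b u (_ : A (bd1 b)) : hol1 b (cs_star u) = cs_star (hol1 b u).
  by have [_ _ _ hS _] := hol1_star_iso b; rewrite hS.
apply: (hol_rel_map2 (F := fun _ u v => u * v) hol_mul _ hxy).
exact: (hol_rel_map2 (F := fun _ u _ => cs_star u) hol_star hxy hxy).
Qed.

Lemma hol_rel_one a e p (x : A a) (y : A e) : hol_rel p x y -> hol_rel p (1 : A a) (1 : A e).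
Proof.
move=> hxy; have hol_one b (_ _ : A (bd1 b)) : hol1 b 1 = 1.
  by have [_ _ h1 _ _] := hol1_star_iso b; rewrite h1.
exact: (hol_rel_map2 (F := fun _ _ _ => 1) hol_one hxy hxy).
Qed.

Lemma bundle_state_hol om : is_bundle_state N om ->
  forall a e p (x : A a) (y : A e), hol_rel p x y -> om e y = om a x.
Proof.
case=> _ om_j a e p x y; elim=> // b e' p' x' y' _ ->.
have [_ _ _ _ [_ jK]] := nb_iso N (bd0_le b).
by rewrite /Defs.hol1 (om_j _ _ (bd0_le b)) jK -om_j.
Qed.

Lemma bundle_state_invariant o om :
  is_bundle_state N om -> is_invariant_state N o (om o).
Proof. by move=> om_state; split; [case: om_state | move=> p x y /(bundle_state_hol om_state)]. Qed.

Section Connected.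
Hypothesis Kconn : pathwise_connected K.

Lemma hol_rel_to (o a : K) (x : A a) : exists y : A o, exists p, hol_rel p x y.
Proof.
have [p hp] := Kconn a o; have [y hy] := hol_rel_exists hp x.
by exists y, p.
Qed.

Lemma bundle_state_unique o om om' :
    is_bundle_state N om -> is_bundle_state N om' ->
  (forall x, om o x = om' o x) -> forall a x, om a x = om' a x.
Proof.
move=> om_state om'_state eq_o a x; have [y [p hxy]] := hol_rel_to o x.
by rewrite -(bundle_state_hol om_state hxy) -(bundle_state_hol om'_state hxy).
Qed.

Variables (o : K) (phi : A o -> R[i]).
Hypothesis phi_inv : is_invariant_state N o phi.

Lemma invariant_state_hol_eq a p q (x : A a) (y y' : A o) :
  hol_rel p x y -> hol_rel q x y' -> phi y = phi y'.
Proof.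
move=> hxy hxy'; have [_ phi_hol] := phi_inv.
exact: phi_hol (hol_rel_cat (hol_rel_rev hxy') hxy).
Qed.

Definition extend_state a (x : A a) : R[i] :=
  phi (proj1_sig (constructive_indefinite_description _ (hol_rel_to o x))).

Lemma extend_stateE a p (x : A a) (y : A o) : hol_rel p x y -> extend_state x = phi y.
Proof.
move=> hxy; rewrite /extend_state.
by case: constructive_indefinite_description => y0 [p0 hxy0] /=; apply: invariant_state_hol_eq hxy0 hxy.
Qed.

Lemma extend_state_at x : extend_state x = phi x.
Proof. exact: extend_stateE (hol_nil x). Qed.

Lemma extend_state_is_state a : is_state (@extend_state a).
Proof.
have [[phi_lin [phi_pos phi1]] _] := phi_inv.
have [p hp] := Kconn a o; have transport := hol_rel_exists hp.
split; [|split].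
- move=> c x x'; have [y hxy] := transport x; have [y' hxy'] := transport x'.
  by rewrite (extend_stateE (hol_rel_lin c hxy hxy')) phi_lin (extend_stateE hxy) (extend_stateE hxy').
- move=> x; have [y hxy] := transport x.
  by rewrite (extend_stateE (hol_rel_star_mul hxy)); apply: phi_pos.
- have [y hxy] := transport 1.
  by rewrite (extend_stateE (hol_rel_one hxy)); apply: phi1.
Qed.

Lemma extend_state_compat a e (h : (a <= e)%O) (x : A a) :
  extend_state x = extend_state (nb_j N h x).
Proof.
have [y [p hxy]] := hol_rel_to o x.
rewrite (extend_stateE hxy); symmetry; apply: (extend_stateE (p := simplex_of_le h :: p)).
by apply: (hol_cons (b := simplex_of_le h)); rewrite hol1_simplex_of_le.
Qed.

Lemma extend_state_is_bundle_state : is_bundle_state N extend_state.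
Proof. by split; [apply: extend_state_is_state | apply: extend_state_compat]. Qed.

End Connected.
End Holonomy.

Theorem lemma4p1 (R : realType) (disp : Order.disp_t) (K : porderType disp)
    (N : netBundle R K) (o : K) (Kconn : pathwise_connected K) :
  (forall om : forall a : K, nb_alg N a -> R[i],
      is_bundle_state N om -> is_invariant_state N o (om o)) /\
  (forall phi : nb_alg N o -> R[i],
      is_invariant_state N o phi ->
      exists om : forall a : K, nb_alg N a -> R[i],
        is_bundle_state N om /\ forall x, om o x = phi x) /\
  (forall om om' : forall a : K, nb_alg N a -> R[i],
      is_bundle_state N om -> is_bundle_state N om' ->
      (forall x, om o x = om' o x) -> forall a x, om a x = om' a x).
Proof.
split; first by move=> om; apply: bundle_state_invariant.
split; last exact: (@bundle_state_unique _ _ _ N Kconn o).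
move=> phi phi_inv; exists (extend_state Kconn phi).
split; [exact: extend_state_is_bundle_state | exact: extend_state_at].
Qed.
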